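(* Suppose $\bar f$, $f$, $g$ satisfy $V(\bar f,f)=0$. Then for all $x_1,x_2$, $$\frac{(f-x_1)\,V(x_2,f)}{(\bar f-x_2)\,V(\bar f,x_1)}=\frac{(h_1-h_2q)\,\varphi}{(h_1-h_2)\,\varphi_u},$$ where $\varphi=\varphi(f,g)$ and $V(\cdot,\cdot)$ is evaluated at the same $g$.
   Context: Let $h_1,h_2,u_1,\dots,u_8$ be generic nonzero complex parameters and $q=h_1^2h_2^2/(u_1\cdots u_8)$. Let $\varphi(f,g)=(f-g)\big(\frac{f}{h_1}-\frac{g}{h_2}\big)-(h_1-h_2)\big(\frac1{h_1}-\frac1{h_2}\big)$ and $\varphi_u=(\bar f-g)\big(\frac{q\bar f}{h_1}-\frac{g}{h_2}\big)-(\frac{h_1}{q}-h_2)\big(\frac q{h_1}-\frac1{h_2}\big)$ (i.e. $\varphi$ with $f\to\bar f$, $h_1\to h_1/q$). Let $U(z)=\prod_{i=1}^8(z-u_i)=\sum_{i=0}^8(-1)^i m_{8-i}z^i$ (so $m_0=1$, $m_8=h_1^2h_2^2/q$). For a parameter $h$ define polynomials in $g$: $P_n(h,g)=m_0g^4-m_1g^3+(m_2-3hm_0-h^{-3}m_8)g^2+(2hm_1-m_3+h^{-2}m_7)g+(h^2m_0-hm_2+m_4-h^{-1}m_6+h^{-2}m_8)$, $P_d(h,g)=m_8g^4-hm_7g^3+(h^2m_6-3hm_8-h^5m_0)g^2+(2h^2m_7-h^3m_5+h^5m_1)g+(h^6m_0-h^5m_2+h^4m_4-h^3m_6+h^2m_8)$.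 Define, for variables $f_0,f,g$, $V(f_0,f)=q\Big[(f_0-g)(f-g)-\big(\tfrac{h_1}{q}-h_2\big)(h_1-h_2)\tfrac1{h_2}\Big]P_d(h_2,g)-h_1^2h_2^4\Big[\big(\tfrac{f_0q}{h_1}-\tfrac{g}{h_2}\big)\big(\tfrac{f}{h_1}-\tfrac{g}{h_2}\big)-\big(\tfrac{q}{h_1}-\tfrac1{h_2}\big)\big(\tfrac1{h_1}-\tfrac1{h_2}\big)h_2\Big]P_n(h_2,g)$ (it also depends on $g$). *)

From HB Require Import structures.
From mathcomp Require Import all_boot all_order all_algebra.
Set Implicit Arguments. Unset Strict Implicit. Unset Printing Implicit Defensive.
Import Order.TTheory GRing.Theory Num.Theory.
Local Open Scope ring_scope.

Section Defs.
Variable C : fieldType.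

Definition qpar (h1 h2 : C) (u : 'I_8 -> C) : C :=
  h1 ^+ 2 * h2 ^+ 2 / \prod_(i < 8) u i.

Definition Upoly (u : 'I_8 -> C) : {poly C} := \prod_(i < 8) ('X - (u i)%:P).

(* U(z) = sum_{i=0}^8 (-1)^i m_{8-i} z^i, i.e. m_k = (-1)^(8-k) * coeff_{8-k}... 
   precisely: coefficient of z^i is (-1)^i m_{8-i}, so m_k = (-1)^(8-k) U`_(8-k). *)
Definition mcoef (u : 'I_8 -> C) (k : nat) : C :=
  (-1) ^+ (8 - k) * (Upoly u)`_(8 - k).

Definition varphi (h1 h2 f g : C) : C :=
  (f - g) * (f / h1 - g / h2) - (h1 - h2) * (h1^-1 - h2^-1).

Definition varphi_u (h1 h2 : C) (u : 'I_8 -> C) (fb g : C) : C :=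
  let q := qpar h1 h2 u in
  (fb - g) * (q * fb / h1 - g / h2) - (h1 / q - h2) * (q / h1 - h2^-1).

Definition Pn (u : 'I_8 -> C) (h g : C) : C :=
  let m := mcoef u in
  m 0%N * g ^+ 4 - m 1%N * g ^+ 3
  + (m 2%N - 3 * h * m 0%N - h ^- 3 * m 8%N) * g ^+ 2
  + (2 * h * m 1%N - m 3%N + h ^- 2 * m 7%N) * g
  + (h ^+ 2 * m 0%N - h * m 2%N + m 4%N - h^-1 * m 6%N + h ^- 2 * m 8%N).

Definition Pd (u : 'I_8 -> C) (h g : C) : C :=
  let m := mcoef u in
  m 8%N * g ^+ 4 - h * m 7%N * g ^+ 3
  + (h ^+ 2 * m 6%N - 3 * h * m 8%N - h ^+ 5 * m 0%N) * g ^+ 2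
  + (2 * h ^+ 2 * m 7%N - h ^+ 3 * m 5%N + h ^+ 5 * m 1%N) * g
  + (h ^+ 6 * m 0%N - h ^+ 5 * m 2%N + h ^+ 4 * m 4%N - h ^+ 3 * m 6%N
     + h ^+ 2 * m 8%N).

Definition Vfun (h1 h2 : C) (u : 'I_8 -> C) (g f0 f : C) : C :=
  let q := qpar h1 h2 u in
  q * ((f0 - g) * (f - g) - (h1 / q - h2) * (h1 - h2) / h2) * Pd u h2 g
  - h1 ^+ 2 * h2 ^+ 4 *
    ((f0 * q / h1 - g / h2) * (f / h1 - g / h2)
     - (q / h1 - h2^-1) * (h1^-1 - h2^-1) * h2) * Pn u h2 g.

End Defs.

From HB Require Import structures.
From mathcomp Require Import all_boot all_order all_algebra.
From mathcomp Require Import ring.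
Import Order.TTheory GRing.Theory Num.Theory.
Set Implicit Arguments. Unset Strict Implicit.
Local Open Scope ring_scope.

(* V(f0, f) is affine in each argument, so when V(fb, f) = 0 the left-hand side
   is the slope of V in f0 (taken at f) divided by its slope in f (taken at fb).
   Cross-multiplied, this ratio differs from the right-hand side by a multiple of
   V(fb, f), the multiplier being the affine form
   (h1 - h2) (q fb / h1 - g / h2) - (h1 - h2 q) (f / h1 - g / h2). *)

Lemma qpar_neq0 (C : fieldType) (h1 h2 : C) (u : 'I_8 -> C) :
  h1 != 0 -> h2 != 0 -> (forall i, u i != 0) -> qpar h1 h2 u != 0.
Proof.
move=> h1n h2n un; rewrite /qpar mulf_neq0 ?invr_eq0 ?mulf_neq0 ?expf_neq0 //.
by apply/prodf_neq0 => i _; exact: un.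
Qed.

Section VfunSlopes.
Variables (C : fieldType) (h1 h2 : C) (u : 'I_8 -> C) (g : C).
Hypotheses (h1n : h1 != 0) (h2n : h2 != 0) (qn : qpar h1 h2 u != 0).

Local Notation q := (qpar h1 h2 u).
Local Notation V := (Vfun h1 h2 u g).

Definition Vslope_first (f : C) : C :=
  q * Pd u h2 g * (f - g)
  - h1 ^+ 2 * h2 ^+ 4 * Pn u h2 g * (q / h1) * (f / h1 - g / h2).

Definition Vslope_second (f0 : C) : C :=
  q * Pd u h2 g * (f0 - g)
  - h1 ^+ 2 * h2 ^+ 4 * Pn u h2 g * (f0 * q / h1 - g / h2) / h1.

Lemma Vfun_shift_first (f0 f0' f : C) :
  V f0' f = V f0 f + (f0' - f0) * Vslope_first f.
Proof. by rewrite /Vfun /Vslope_first; field; rewrite h1n h2n qn. Qed.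

Lemma Vfun_shift_second (f0 f f' : C) :
  V f0 f' = V f0 f + (f' - f) * Vslope_second f0.
Proof. by rewrite /Vfun /Vslope_second; field; rewrite h1n h2n qn. Qed.

Lemma Vfun_slope_ratio (fb f : C) :
  Vslope_first f * ((h1 - h2) * varphi_u h1 h2 u fb g)
  - (h1 - h2 * q) * varphi h1 h2 f g * Vslope_second fb
  = ((h1 - h2) * (q * fb / h1 - g / h2) - (h1 - h2 * q) * (f / h1 - g / h2))
    * V fb f.
Proof.
rewrite /Vfun /Vslope_first /Vslope_second /varphi /varphi_u.
by field; rewrite h1n h2n qn.
Qed.

End VfunSlopes.

Theorem lemma1 (C : numClosedFieldType) (h1 h2 : C) (u : 'I_8 -> C)
    (fb f g x1 x2 : C) :
  h1 != 0 -> h2 != 0 -> (forall i, u i != 0) ->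
  Vfun h1 h2 u g fb f = 0 ->
  fb - x2 != 0 -> Vfun h1 h2 u g fb x1 != 0 ->
  h1 - h2 != 0 -> varphi_u h1 h2 u fb g != 0 ->
  (f - x1) * Vfun h1 h2 u g x2 f / ((fb - x2) * Vfun h1 h2 u g fb x1)
  = (h1 - h2 * qpar h1 h2 u) * varphi h1 h2 f g
    / ((h1 - h2) * varphi_u h1 h2 u fb g).
Proof.
move=> h1n h2n un hV hx2 hV1 h12 hphiu.
have qn := qpar_neq0 h1n h2n un.
have shift1 := Vfun_shift_first g h1n h2n qn fb x2 f.
have shift2 := Vfun_shift_second g h1n h2n qn fb f x1.
have /eqP := Vfun_slope_ratio g h1n h2n qn fb f.
rewrite hV mulr0 subr_eq0 => /eqP ratio.
rewrite shift2 hV add0r in hV1.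
rewrite shift1 shift2 hV !add0r.
apply/eqP; rewrite eqr_div ?(mulf_neq0 hx2 hV1) ?(mulf_neq0 h12 hphiu) //.
apply/eqP; transitivity ((f - x1) * (x2 - fb) *
  (Vslope_first h1 h2 u g f * ((h1 - h2) * varphi_u h1 h2 u fb g))).
  by ring.
by rewrite ratio; ring.
Qed.
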